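(* Let $V$ be a finite nonempty set, $U,U'\subseteq V$ disjoint, $U''=V\setminus(U\cup U')$, $i\in U$, $j\in U'$, and $\hat x$ a maximally specific partial function on $P_V$. Let $P'_{01}=\{pq\in U\times U'\mid \hat x_{pi}\neq 0\neq \hat x_{jq}\}\setminus\hat x^{-1}(1)$ and $P'_{10}=\big((U''\times U)\cup(U'\times U)\cup(U'\times U'')\big)\setminus\hat x^{-1}(0)$. Then $P_{01}[\gamma^{ij|1}]\subseteq P'_{01}$ and $P_{10}[\gamma^{ij|1}]\subseteq P'_{10}$.
   Context: $P_V=\{pq\in V^2\mid p\neq q\}$; $X_V$ is the set of $x\in\{0,1\}^{P_V}$ with $x_{pq}+x_{qr}-x_{pr}\le 1$ for all pairwise distinct $p,q,r\in V$. A partial function $\tilde x$ is a map from $\operatorname{dom}(\tilde x)\subseteq P_V$ to $\{0,1\}$, $\tilde x^{-1}(b)$ the pairs mapped to $b$; convention $\tilde x_{aa}=1$ and $x_{aa}=1$ for all $a\in V$, $x\in X_V$. $X_V[\tilde x]=\{x\in X_V\mid x_{pq}=\tilde x_{pq}\ \forall pq\in\operatorname{dom}(\tilde x)\}$. A pair $pq$ is decided if $x_{pq}=x'_{pq}$ for all $x,x'\in X_V[\tilde x]$; $\tilde x$ is maximally specific if $X_V[\tilde x]\ne\emptyset$ and the decided pairs are exactly $\operatorname{dom}(\tilde x)$. For $A,B\subseteq V$ disjoint with $A\cup B=V$, the dicut map $\sigma_{A\times B}\colon X_V\to X_V$ sets $\sigma_{A\times B}(x)_{pq}=0$ if $pq\in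 A\times B$ and $=x_{pq}$ otherwise. For $ij\in P_V$, the join map $\sigma_{ij}\colon X_V\to X_V$ sets $\sigma_{ij}(x)_{pq}=1$ if $x_{pi}=x_{jq}=1$ and $=x_{pq}$ otherwise. Let $\gamma=\sigma_{ij}\circ\sigma_{(V\setminus U)\times U}\circ\sigma_{U'\times(V\setminus U')}$ and $\gamma^{ij|1}\colon X_V[\hat x]\to X_V$ with $\gamma^{ij|1}(x)=x$ if $x_{ij}=1$ and $\gamma^{ij|1}(x)=\gamma(x)$ if $x_{ij}=0$. For a map $\sigma\colon X_V[\hat x]\to X_V$ and $a,b\in\{0,1\}$, $P_{ab}[\sigma]=\{e\in P_V\mid\exists x\in X_V[\hat x]: x_e=a\wedge\sigma(x)_e=b\}$. *)

From mathcomp Require Import all_boot.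
Set Implicit Arguments. Unset Strict Implicit. Unset Printing Implicit Defensive.

Section Defs.
Variable V : finType.

(* An element x of {0,1}^{P_V} is represented as a relation V -> V -> bool;
   only its values on P_V (p != q) matter, the diagonal is fixed to 1 by the
   convention x_aa = 1. *)
Definition in_XV (x : rel V) : Prop :=
  (forall a, x a a = true) /\
  (forall p q r, p != q -> q != r -> p != r -> x p q -> x q r -> x p r).

(* A partial function on P_V: xh p q = Some b means pq in dom with value b;
   values on the diagonal are ignored (dom is a subset of P_V). *)
Definition pfun := V -> V -> option bool.

Definition in_dom (xh : pfun) (p q : V) : Prop := p != q /\ xh p q <> None.

Definition xval (xh : pfun) (p q : V) : option bool :=
  if p == q then Some true else xh p q.

Definition in_XVh (xh : pfun) (x : rel V) : Prop :=
  in_XV x /\ forall p q, p != q -> forall b, xh p q = Some b -> x p q = b.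

Definition decided (xh : pfun) (p q : V) : Prop :=
  forall x x', in_XVh xh x -> in_XVh xh x' -> x p q = x' p q.

Definition maximally_specific (xh : pfun) : Prop :=
  (exists x, in_XVh xh x) /\
  (forall p q, p != q -> (decided xh p q <-> in_dom xh p q)).

Definition sigma_dicut (A B : {set V}) (x : rel V) : rel V :=
  fun p q => if (p \in A) && (q \in B) then false else x p q.

Definition sigma_join (i j : V) (x : rel V) : rel V :=
  fun p q => if x p i && x j q then true else x p q.

Definition gamma (U U' : {set V}) (i j : V) (x : rel V) : rel V :=
  sigma_join i j (sigma_dicut (~: U) U (sigma_dicut U' (~: U') x)).

Definition gamma1 (U U' : {set V}) (i j : V) (x : rel V) : rel V :=
  if x i j then x else gamma U U' i j x.

Definition Pab (xh : pfun) (sigma : rel V -> rel V) (a b : bool) (p q : V) : Prop :=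
  p != q /\ exists x, in_XVh xh x /\ x p q = a /\ sigma x p q = b.

Definition P'01 (xh : pfun) (U U' : {set V}) (i j : V) (p q : V) : Prop :=
  [/\ p \in U, q \in U', xval xh p i <> Some false, xval xh j q <> Some false
    & ~ (p != q /\ xh p q = Some true)].

Definition P'10 (xh : pfun) (U U' : {set V}) (p q : V) : Prop :=
  let U'' := ~: (U :|: U') in
  ((p \in U'') && (q \in U) || (p \in U') && (q \in U) || (p \in U') && (q \in U''))
  /\ ~ (p != q /\ xh p q = Some false).

End Defs.

From mathcomp Require Import all_boot.

(* The two dicuts can only turn entries of x from 1 to 0, the join only from
   0 to 1.  An entry pq lowered by gamma lies in one of the dicut regions
   ((V\U) x U or U' x (V\U')), and an entry raised by gamma is
   joined through ij, which after the dicuts forces p in U, q in U' and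
   x_pi = x_jq = 1.  Since every x in X_V[xh] agrees with xh on its domain,
   such entries of x avoid the values forbidden by P'_01 and P'_10. *)

Set Implicit Arguments.
Unset Strict Implicit.
Unset Printing Implicit Defensive.

Section FlipMaps.
Variable V : finType.
Implicit Types (A B U : {set V}) (x : rel V) (i j p q : V).

Lemma sigma_dicutP A B x p q :
  sigma_dicut A B x p q = ~~ ((p \in A) && (q \in B)) && x p q.
Proof. by rewrite /sigma_dicut; case: ifP. Qed.

Lemma sigma_joinP i j x p q :
  sigma_join i j x p q = x p i && x j q || x p q.
Proof. by rewrite /sigma_join; case: ifP. Qed.

Lemma gamma_flip01 U (U' : {set V}) i j x p q :
  [disjoint U & U'] -> i \in U -> j \in U' ->
  ~~ x p q -> gamma U U' i j x p q ->
  [/\ p \in U, q \in U', x p i & x j q].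
Proof.
move=> dUU' iU jU' xpq.
have jNU : j \notin U by rewrite (disjointFl dUU').
have iNU' : i \notin U' by rewrite (disjointFr dUU').
rewrite /gamma sigma_joinP !sigma_dicutP !inE (negbTE xpq) !andbF orbF.
rewrite iU jU' (negbTE jNU) (negbTE iNU') /= !andbT !negbK.
by case/and4P=> /and3P[-> _ ->] _ -> ->.
Qed.

Lemma gamma_flip10 U (U' : {set V}) i j x p q :
  x p q -> ~~ gamma U U' i j x p q ->
  (p \in ~: (U :|: U')) && (q \in U) || (p \in U') && (q \in U)
    || (p \in U') && (q \in ~: (U :|: U')).
Proof.
rewrite /gamma sigma_joinP !sigma_dicutP !inE => -> /=; rewrite negb_or => /andP[_].
by case: (p \in U); case: (p \in U'); case: (q \in U); case: (q \in U').
Qed.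

Lemma gamma1_flip U (U' : {set V}) i j x p q :
  gamma1 U U' i j x p q != x p q -> gamma U U' i j x p q != x p q.
Proof. by rewrite /gamma1; case: ifP => //; rewrite eqxx. Qed.

End FlipMaps.

Section RestrictedSolutions.
Variable V : finType.
Implicit Types (xh : pfun V) (x : rel V) (p q : V).

Lemma in_XVh_dom xh x p q b :
  in_XVh xh x -> x p q = b -> ~ (p != q /\ xh p q = Some (~~ b)).
Proof. by case=> _ xh_x <- [pq /(xh_x _ _ pq)]; case: (x p q). Qed.

Lemma in_XVh_xval xh x p q :
  in_XVh xh x -> x p q -> xval xh p q <> Some false.
Proof.
move=> Xx xpq; rewrite /xval; case: eqP => // /eqP pq xhpq.
exact: in_XVh_dom Xx xpq (conj pq xhpq).
Qed.

End RestrictedSolutions.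

Theorem lemma6p4 (V : finType) (v0 : V) (U U' : {set V}) (i j : V)
    (xh : pfun V) :
  [disjoint U & U'] -> i \in U -> j \in U' -> maximally_specific xh ->
  (forall p q, Pab xh (gamma1 U U' i j) false true p q -> P'01 xh U U' i j p q) /\
  (forall p q, Pab xh (gamma1 U U' i j) true false p q -> P'10 xh U U' p q).
Proof.
move=> dUU' iU jU' _; split=> p q [pq [x [Xx [xpq gxpq]]]].
- have /gamma1_flip : gamma1 U U' i j x p q != x p q by rewrite xpq gxpq.
  rewrite xpq eqbF_neg negbK => raised.
  have [pU qU' xpi xjq] := gamma_flip01 dUU' iU jU' (negbT xpq) raised.
  split=> //; [exact: in_XVh_xval Xx xpi | exact: in_XVh_xval Xx xjq |].
  exact: in_XVh_dom Xx xpq.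
- have /gamma1_flip : gamma1 U U' i j x p q != x p q by rewrite xpq gxpq.
  rewrite xpq eqb_id => lowered.
  split; last exact: in_XVh_dom Xx xpq.
  exact: gamma_flip10 xpq lowered.
Qed.
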